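(* Let $E_1$ and $E_2$ be vector lattices with the countable sup property. Consider $E_1\times E_2$ with either the coordinatewise order ($(x_1,y_1)\le(x_2,y_2)$ iff $x_1\le x_2$ and $y_1\le y_2$) or the lexicographic order ($(x_1,y_1)\preceq(x_2,y_2)$ iff $x_1<x_2$, or $x_1=x_2$ and $y_1\le y_2$). With respect to either order, $E_1\times E_2$ has the countable sup property, in the sense that whenever $(z_\alpha)$ is an increasing net with $0\le z_\alpha\uparrow z$ (i.e. $z$ is the supremum of the net), there is an increasing sequence of indices $(\alpha_n)$ with $0\le z_{\alpha_n}\uparrow z$.
   Context: A vector lattice $E$ has the countable sup property if for every net with $0\le x_\alpha\uparrow x$ in $E$ there is an increasing sequence of indices $\alpha_n$ with $0\le x_{\alpha_n}\uparrow x$ (equivalently, every nonempty subset possessing a supremum contains a countable subset with the same supremum). *)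

From HB Require Import structures.
From mathcomp Require Import all_boot all_order all_algebra.
From mathcomp Require Import reals.
Set Implicit Arguments.
Unset Strict Implicit.
Unset Printing Implicit Defensive.
Import Order.TTheory GRing.Theory Num.Theory.
Local Open Scope ring_scope.

Definition is_sup (T : Type) (le : T -> T -> Prop) (S : T -> Prop) (x : T) : Prop :=
  (forall y, S y -> le y x) /\ (forall u, (forall y, S y -> le y u) -> le x u).

Definition is_inf (T : Type) (le : T -> T -> Prop) (S : T -> Prop) (x : T) : Prop :=
  (forall y, S y -> le x y) /\ (forall u, (forall y, S y -> le u y) -> le u x).

Record is_vector_lattice (R : realType) (E : lmodType R) (le : E -> E -> Prop) : Prop := {
  vl_refl : forall x, le x x;
  vl_antisym : forall x y, le x y -> le y x -> x = y;
  vl_trans : forall x y z, le x y -> le y z -> le x z;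
  vl_add : forall x y z, le x y -> le (x + z) (y + z);
  vl_scale : forall (a : R) x y, 0 <= a -> le x y -> le (a *: x) (a *: y);
  vl_sup : forall x y, exists s, is_sup le (fun w => w = x \/ w = y) s;
  vl_inf : forall x y, exists i, is_inf le (fun w => w = x \/ w = y) i
}.

Definition directed (A : Type) (leA : A -> A -> Prop) : Prop :=
  inhabited A /\
  (forall a, leA a a) /\
  (forall a b c, leA a b -> leA b c -> leA a c) /\
  (forall a b, exists c, leA a c /\ leA b c).

Definition net_up (T A : Type) (le : T -> T -> Prop) (z0 : T)
  (leA : A -> A -> Prop) (z : A -> T) (x : T) : Prop :=
  (forall a, le z0 (z a)) /\
  (forall a b, leA a b -> le (z a) (z b)) /\
  is_sup le (fun w => exists a, w = z a) x.

Definition countable_sup_property (T : Type) (le : T -> T -> Prop) (z0 : T) : Prop :=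
  forall (A : Type) (leA : A -> A -> Prop) (z : A -> T) (x : T),
    directed leA -> net_up le z0 leA z x ->
    exists s : nat -> A,
      (forall n, leA (s n) (s n.+1)) /\
      net_up le z0 (fun m n : nat => (m <= n)%N) (fun n => z (s n)) x.

Definition coord_le (E1 E2 : Type) (le1 : E1 -> E1 -> Prop) (le2 : E2 -> E2 -> Prop)
  (p q : E1 * E2) : Prop := le1 p.1 q.1 /\ le2 p.2 q.2.

Definition lex_le (E1 E2 : Type) (le1 : E1 -> E1 -> Prop) (le2 : E2 -> E2 -> Prop)
  (p q : E1 * E2) : Prop :=
  (le1 p.1 q.1 /\ p.1 <> q.1) \/ (p.1 = q.1 /\ le2 p.2 q.2).

(* For the coordinatewise order a net increases to (x, y) exactly when its
   coordinates increase to x and to y; directedness of the index set merges the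
   two countable subnets given by the factors into a single increasing sequence
   of indices that serves both.

   For the lexicographic order the first coordinates still increase to x: if an
   upper bound u of them had m := inf(u, x) < x, a point strictly between m and x
   would give a smaller lexicographic upper bound.  If some first coordinate
   equals x, then beyond that index the first coordinate is constantly x and the
   second coordinates increase to y, so the countable sup property of E2 applies
   to this tail (after translating its lower bound to 0).  Otherwise all first
   coordinates stay strictly below x, which forces y to lie below every element
   of E2; then any sequence whose first coordinates increase to x works. *)

From mathcomp Require Import all_boot all_order all_algebra.
From mathcomp Require Import reals.
From Stdlib Require Import Classical ClassicalEpsilon.
Set Implicit Arguments.
Unset Strict Implicit.
Unset Printing Implicit Defensive.
Import GRing.Theory Num.Theory.
Local Open Scope ring_scope.

Definition range (I T : Type) (f : I -> T) : T -> Prop := fun w => exists i, w = f i.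

Section Nets.

Variables (T : Type) (le : T -> T -> Prop).
Hypothesis le_trans : forall x y z, le x y -> le y z -> le x z.

Lemma is_sup_range_dominated (I J : Type) (f : I -> T) (g : J -> T) x :
  is_sup le (range f) x -> (forall j, le (g j) x) ->
  (forall i, exists j, le (f i) (g j)) -> is_sup le (range g) x.
Proof.
move=> [_ f_lub] g_ub f_le_g; split; first by move=> _ [j ->].
move=> u u_ub; apply: f_lub => _ [i ->].
have [j fg] := f_le_g i.
exact: le_trans fg (u_ub _ (ex_intro _ j erefl)).
Qed.

Variables (A : Type) (leA : A -> A -> Prop).
Hypothesis leA_trans : forall a b c, leA a b -> leA b c -> leA a c.

Lemma increasing_seq_mono (s : nat -> A) :
  (forall a, leA a a) -> (forall n, leA (s n) (s n.+1)) ->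
  forall m n, (m <= n)%N -> leA (s m) (s n).
Proof.
move=> leA_refl s_inc m; elim=> [|n IHn]; first by rewrite leqn0 => /eqP ->.
rewrite leq_eqVlt => /orP [/eqP -> // | /IHn s_mn].
exact: leA_trans s_mn (s_inc n).
Qed.

Lemma directed_increasing_ub (s1 s2 : nat -> A) :
  (forall a b, exists c, leA a c /\ leA b c) ->
  exists t : nat -> A,
    forall n, [/\ leA (s1 n) (t n), leA (s2 n) (t n) & leA (t n) (t n.+1)].
Proof.
move=> leA_ub.
pose up a b := proj1_sig (constructive_indefinite_description _ (leA_ub a b)).
have upP a b : leA a (up a b) /\ leA b (up a b) :=
  proj2_sig (constructive_indefinite_description _ (leA_ub a b)).
pose t := fix t n := up (if n is m.+1 then t m else s1 0%N) (up (s1 n) (s2 n)).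
have tE n : t n = up (if n is m.+1 then t m else s1 0%N) (up (s1 n) (s2 n)).
  by case: n.
exists t => n; split; last exact: (upP (t n) _).1.
- by rewrite tE; exact: leA_trans (upP _ _).1 (upP _ _).2.
- by rewrite tE; exact: leA_trans (upP _ _).2 (upP _ _).2.
Qed.

Lemma directed_tail (b0 : A) :
  directed leA -> directed (fun b c : {b | leA b0 b} => leA (sval b) (sval c)).
Proof.
move=> [_ [leA_refl [_ leA_ub]]]; split; first exact: inhabits (exist _ b0 (leA_refl b0)).
split=> [b|]; first exact: leA_refl.
split=> [b c d|]; first exact: leA_trans.
move=> [b b0b] [c b0c]; have [d [bd cd]] := leA_ub b c.
by exists (exist _ d (leA_trans b0b bd)).
Qed.

Lemma is_sup_tail (z : A -> T) x (b0 : A) :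
  (forall a b, exists c, leA a c /\ leA b c) ->
  (forall a b, leA a b -> le (z a) (z b)) ->
  is_sup le (range z) x -> is_sup le (range (fun b : {b | leA b0 b} => z (sval b))) x.
Proof.
move=> leA_ub z_mono [z_ub z_lub]; split=> [_ [b ->]|u u_ub].
  exact: z_ub (ex_intro _ (sval b) erefl).
apply: z_lub => _ [a ->]; have [c [ac b0c]] := leA_ub a b0.
exact: le_trans (z_mono _ _ ac) (u_ub _ (ex_intro _ (exist _ c b0c) erefl)).
Qed.

End Nets.

Lemma countable_sup_property_of_sup_subseq (T : Type) (le : T -> T -> Prop) (z0 : T) :
  (forall (A : Type) (leA : A -> A -> Prop) (z : A -> T) (x : T),
      directed leA -> net_up le z0 leA z x ->
      exists s : nat -> A,
        (forall n, leA (s n) (s n.+1)) /\ is_sup le (range (fun n => z (s n))) x) ->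
  countable_sup_property le z0.
Proof.
move=> sup_subseq A leA z x dir net; have [_ [leA_refl [leA_trans _]]] := dir.
have [z_ge0 [z_mono _]] := net.
have [s [s_inc s_sup]] := sup_subseq A leA z x dir net.
exists s; split=> //; split=> [n|]; first exact: z_ge0.
split=> // m n mn; exact: z_mono (increasing_seq_mono leA_trans leA_refl s_inc mn).
Qed.

Section CoordinatewiseOrder.

Variables (E1 E2 : Type) (le1 : E1 -> E1 -> Prop) (le2 : E2 -> E2 -> Prop).
Local Notation le := (coord_le le1 le2).

Lemma is_sup_coord (I : Type) (f : I -> E1 * E2) x y :
  is_sup le (range f) (x, y) <->
  is_sup le1 (range (fun i => (f i).1)) x /\ is_sup le2 (range (fun i => (f i).2)) y.
Proof.
split=> [[f_ub f_lub]|[[f1_ub f1_lub] [f2_ub f2_lub]]].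
  have f_ub' i : le (f i) (x, y) := f_ub _ (ex_intro _ i erefl).
  split; split=> [_ [i ->]|u u_ub].
  - exact: (f_ub' i).1.
  - apply: (proj1 (f_lub (u, y) _)) => _ [i ->].
    by split; [exact: u_ub (ex_intro _ i erefl) | exact: (f_ub' i).2].
  - exact: (f_ub' i).2.
  - apply: (proj2 (f_lub (x, u) _)) => _ [i ->].
    by split; [exact: (f_ub' i).1 | exact: u_ub (ex_intro _ i erefl)].
split=> [_ [i ->]|[u v] uv_ub].
  by split; [exact: f1_ub (ex_intro _ i erefl) | exact: f2_ub (ex_intro _ i erefl)].
split; [apply: f1_lub | apply: f2_lub] => _ [i ->].
- exact: (uv_ub _ (ex_intro _ i erefl)).1.
- exact: (uv_ub _ (ex_intro _ i erefl)).2.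
Qed.

Lemma net_up_coord (A : Type) (leA : A -> A -> Prop) (z : A -> E1 * E2) c1 c2 x y :
  net_up le (c1, c2) leA z (x, y) ->
  net_up le1 c1 leA (fun a => (z a).1) x /\ net_up le2 c2 leA (fun a => (z a).2) y.
Proof.
move=> [z_ge [z_mono /is_sup_coord [sup1 sup2]]].
split; split=> [a|]; try split=> // a b ab.
- exact: (z_ge a).1.
- exact: (z_mono a b ab).1.
- exact: (z_ge a).2.
- exact: (z_mono a b ab).2.
Qed.

Hypotheses (le1_trans : forall x y z, le1 x y -> le1 y z -> le1 x z)
           (le2_trans : forall x y z, le2 x y -> le2 y z -> le2 x z).

Lemma coord_countable_sup_property c1 c2 :
  countable_sup_property le1 c1 -> countable_sup_property le2 c2 ->
  countable_sup_property le (c1, c2).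
Proof.
move=> csp1 csp2; apply: countable_sup_property_of_sup_subseq.
move=> A leA z [x y] dir net; have [_ [_ [leA_trans leA_ub]]] := dir.
have [_ [z_mono _]] := net.
have [net1 net2] := net_up_coord net.
have [s1 [_ [_ [_ sup1]]]] := csp1 _ _ _ _ dir net1.
have [s2 [_ [_ [_ sup2]]]] := csp2 _ _ _ _ dir net2.
have [t t_ub] := directed_increasing_ub leA_trans s1 s2 leA_ub.
exists t; split=> [n|]; first by have [] := t_ub n.
have [_ [_ [z1_ub _]]] := net1; have [_ [_ [z2_ub _]]] := net2.
apply/is_sup_coord; split.
- apply: (is_sup_range_dominated le1_trans sup1) => [n|n].
    exact: z1_ub (ex_intro _ (t n) erefl).
  by exists n; have [s1t _ _] := t_ub n; exact: (z_mono _ _ s1t).1.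
- apply: (is_sup_range_dominated le2_trans sup2) => [n|n].
    exact: z2_ub (ex_intro _ (t n) erefl).
  by exists n; have [_ s2t _] := t_ub n; exact: (z_mono _ _ s2t).2.
Qed.

End CoordinatewiseOrder.

Section LexicographicOrder.

Variables (E1 E2 : Type) (le1 : E1 -> E1 -> Prop) (le2 : E2 -> E2 -> Prop).
Local Notation le := (lex_le le1 le2).

Lemma lex_le_fst p q : (forall x, le1 x x) -> le p q -> le1 p.1 q.1.
Proof. by move=> le1_refl [[]//|[-> _]]. Qed.

Lemma lex_le_eq_fst p q : p.1 = q.1 -> le p q -> le2 p.2 q.2.
Proof. by move=> pq [[_ []]|[]]. Qed.

Lemma lex_le_trans :
  (forall x y, le1 x y -> le1 y x -> x = y) ->
  (forall x y z, le1 x y -> le1 y z -> le1 x z) ->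
  (forall x y z, le2 x y -> le2 y z -> le2 x z) ->
  forall p q r, le p q -> le q r -> le p r.
Proof.
move=> le1_anti le1_trans le2_trans p q r.
case=> [[pq npq]|[epq pq]] [[qr nqr]|[eqr qr]].
- left; split; first exact: le1_trans pq qr.
  by move=> epr; apply: npq; apply: le1_anti pq _; rewrite epr.
- by left; rewrite -eqr.
- by left; rewrite epq.
- by right; split; [rewrite epq | exact: le2_trans pq qr].
Qed.

Lemma lex_is_sup_const_fst (I : Type) (i0 : I) (f : I -> E1 * E2) x y :
  (forall x, le1 x x) -> (forall i, (f i).1 = x) ->
  is_sup le (range f) (x, y) <-> is_sup le2 (range (fun i => (f i).2)) y.
Proof.
move=> le1_refl f1x; split=> [[f_ub f_lub]|[f2_ub f2_lub]].
  split=> [_ [i ->]|v v_ub].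
    exact: lex_le_eq_fst (f_ub _ (ex_intro _ i erefl)).
  apply: (@lex_le_eq_fst (x, y) (x, v)) => //; apply: f_lub => _ [i ->].
  by right; split; [exact: f1x | exact: v_ub (ex_intro _ i erefl)].
split=> [_ [i ->]|[u v] uv_ub].
  by right; split; [exact: f1x | exact: f2_ub (ex_intro _ i erefl)].
have fi_le i : le (f i) (u, v) := uv_ub _ (ex_intro _ i erefl).
have xu : le1 x u by rewrite -(f1x i0); exact: lex_le_fst (fi_le i0).
case: (classic (x = u)) => [exu|]; last by left.
right; split=> //; apply: f2_lub => _ [i ->].
by apply: lex_le_eq_fst (fi_le i); rewrite f1x.
Qed.

(* Every (x, v) is an upper bound of the family. *)
Lemma lex_sup_snd_least (I : Type) (f : I -> E1 * E2) x y :
  (forall i, (f i).1 <> x) -> is_sup le (range f) (x, y) -> forall v, le2 y v.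
Proof.
move=> f1_ne [f_ub f_lub] v; apply: (@lex_le_eq_fst (x, y) (x, v)) => //.
apply: f_lub => _ [i ->]; left; split; last exact: f1_ne.
by case: (f_ub _ (ex_intro _ i erefl)) => [[]|[/f1_ne]].
Qed.

Lemma lex_is_sup_of_fst (I : Type) (f : I -> E1 * E2) x y :
  (forall x, le1 x x) -> (forall v, le2 y v) -> (forall i, le (f i) (x, y)) ->
  is_sup le1 (range (fun i => (f i).1)) x -> is_sup le (range f) (x, y).
Proof.
move=> le1_refl y_least f_ub [_ f1_lub]; split=> [_ [i ->] //|[u v] uv_ub].
have xu : le1 x u.
  by apply: f1_lub => _ [i ->]; exact: lex_le_fst (uv_ub _ (ex_intro _ i erefl)).
by case: (classic (x = u)) => [<-|]; [right | left].
Qed.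

End LexicographicOrder.

Section VectorLattice.

Variables (R : realType) (E : lmodType R) (le : E -> E -> Prop).
Hypothesis vl : is_vector_lattice le.

Lemma vl_leD2r x y c : le (x + c) (y + c) <-> le x y.
Proof.
split=> [|/(vl_add vl c)] //.
by move=> /(vl_add vl (- c)); rewrite !addrK.
Qed.

Lemma vl_subr_ge0 x y : le 0 (y - x) <-> le x y.
Proof. by rewrite -(vl_leD2r 0 (y - x) x) add0r subrK. Qed.

Lemma vl_exists_between m x :
  le m x -> m <> x -> exists p, [/\ le m p, le p x, p <> m & p <> x].
Proof.
move=> mx m_ne_x; pose h := 2^-1 *: (x - m).
have xmE : x - m = h + h by rewrite -scalerDl -div1r -splitr scale1r.
have h_ge0 : le 0 h.
  rewrite -(scaler0 _ 2^-1); apply: (vl_scale vl); first by rewrite invr_ge0 ler0n.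
  by rewrite vl_subr_ge0.
have h_ne0 : h <> 0.
  by move=> h0; apply: m_ne_x; apply/eqP; rewrite eq_sym -subr_eq0 xmE h0 addr0.
exists (m + h); split.
- by rewrite -vl_subr_ge0 [m + h]addrC addrK.
- by rewrite -vl_subr_ge0 opprD addrA xmE addrK.
- by move=> hm; apply: h_ne0; apply: (addrI m); rewrite addr0.
- by move=> hx; apply: h_ne0; apply: (addIr h); rewrite add0r -xmE -hx [m + h]addrC addrK.
Qed.

Lemma is_sup_range_translate (I : Type) (f g : I -> E) x c :
  (forall i, g i = f i + c) -> is_sup le (range f) x -> is_sup le (range g) (x + c).
Proof.
move=> gE [f_ub f_lub]; split=> [_ [i ->]|u u_ub].
  by rewrite gE vl_leD2r; exact: f_ub (ex_intro _ i erefl).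
rewrite -(subrK c u) vl_leD2r; apply: f_lub => _ [i ->].
by rewrite -(vl_leD2r _ _ c) subrK -gE; exact: u_ub (ex_intro _ i erefl).
Qed.

Lemma vl_countable_sup_property_shift c :
  countable_sup_property le 0 -> countable_sup_property le c.
Proof.
move=> csp0; apply: countable_sup_property_of_sup_subseq.
move=> A leA z x dir [z_ge [z_mono z_sup]].
have net0 : net_up le 0 leA (fun a => z a - c) (x - c).
  split=> [a|]; first by rewrite vl_subr_ge0.
  split=> [a b ab|]; first by rewrite vl_leD2r; exact: z_mono.
  by apply: is_sup_range_translate z_sup.
have [s [s_inc [_ [_ s_sup]]]] := csp0 _ _ _ _ dir net0.
exists s; split=> //; rewrite -(subrK c x).
by apply: is_sup_range_translate s_sup => n; rewrite subrK.
Qed.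

End VectorLattice.

Lemma lex_is_sup_fst (R : realType) (E1 : lmodType R) (E2 : Type)
    (le1 : E1 -> E1 -> Prop) (le2 : E2 -> E2 -> Prop) (I : Type) (f : I -> E1 * E2) x y :
  is_vector_lattice le1 ->
  is_sup (lex_le le1 le2) (range f) (x, y) -> is_sup le1 (range (fun i => (f i).1)) x.
Proof.
move=> vl1 [f_ub f_lub].
have f1_le i : le1 (f i).1 x.
  exact: lex_le_fst (vl_refl vl1) (f_ub _ (ex_intro _ i erefl)).
split=> [_ [i ->] //|u u_ub].
have [m [m_lb m_glb]] := vl_inf vl1 u x.
have mu : le1 m u := m_lb u (or_introl erefl).
have mx : le1 m x := m_lb x (or_intror erefl).
have f1_le_m i : le1 (f i).1 m.
  by apply: m_glb => _ [->|->]; [exact: u_ub (ex_intro _ i erefl) | exact: f1_le].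
case: (classic (m = x)) => [<- // | m_ne_x].
have [p [mp px p_ne_m p_ne_x]] := vl_exists_between vl1 mx m_ne_x.
have xp : le1 x p.
  apply: (lex_le_fst (vl_refl vl1) (f_lub (p, y) _)) => _ [i ->].
  left; split=> [|/= fp]; first exact: vl_trans vl1 _ _ _ (f1_le_m i) mp.
  by apply: p_ne_m; apply: vl_antisym vl1 _ _ _ mp; rewrite -fp.
by case: p_ne_x; apply: vl_antisym vl1 _ _ px xp.
Qed.

Section LexCountableSup.

Variables (R : realType) (E1 E2 : lmodType R).
Variables (le1 : E1 -> E1 -> Prop) (le2 : E2 -> E2 -> Prop).
Hypotheses (vl1 : is_vector_lattice le1) (vl2 : is_vector_lattice le2).
Local Notation le := (lex_le le1 le2).

Variables (A : Type) (leA : A -> A -> Prop) (z : A -> E1 * E2) (x : E1) (y : E2).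
Hypotheses (dir : directed leA) (net : net_up le (0, 0) leA z (x, y)).

Lemma lex_sup_subseq_attained b0 :
  countable_sup_property le2 0 -> (z b0).1 = x ->
  exists s : nat -> A,
    (forall n, leA (s n) (s n.+1)) /\ is_sup le (range (fun n => z (s n))) (x, y).
Proof.
move=> csp2 zb0; have [_ [leA_refl [leA_trans leA_ub]]] := dir.
have [_ [z_mono z_sup]] := net; have [z_ub _] := z_sup.
have le_trans := lex_le_trans (vl_antisym vl1) (vl_trans vl1) (vl_trans vl2).
have z1_tail (b : {b | leA b0 b}) : (z (sval b)).1 = x.
  apply: vl_antisym vl1 _ _ (lex_le_fst (vl_refl vl1) (z_ub _ (ex_intro _ _ erefl))) _.
  by rewrite -[X in le1 X]zb0; exact: lex_le_fst (vl_refl vl1) (z_mono _ _ (svalP b)).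
have tail_net : net_up le2 (z b0).2 (fun b c : {b | leA b0 b} => leA (sval b) (sval c))
    (fun b => (z (sval b)).2) y.
  split=> [b|]; first by apply: lex_le_eq_fst (z_mono _ _ (svalP b)); rewrite z1_tail.
  split=> [b c bc|]; first by apply: lex_le_eq_fst (z_mono _ _ bc); rewrite !z1_tail.
  apply/(lex_is_sup_const_fst _ (exist _ b0 (leA_refl b0)) _ (vl_refl vl1) z1_tail).
  exact: (is_sup_tail (z := z) le_trans b0 leA_ub z_mono z_sup).
have [t [t_inc [_ [_ t_sup]]]] :=
  vl_countable_sup_property_shift vl2 csp2 (directed_tail leA_trans b0 dir) tail_net.
exists (fun n => sval (t n)); split=> //.
exact/(lex_is_sup_const_fst _ 0%N _ (vl_refl vl1) (fun n => z1_tail (t n))).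
Qed.

Lemma lex_sup_subseq_unattained :
  countable_sup_property le1 0 -> (forall a, (z a).1 <> x) ->
  exists s : nat -> A,
    (forall n, leA (s n) (s n.+1)) /\ is_sup le (range (fun n => z (s n))) (x, y).
Proof.
move=> csp1 z1_ne; have [z_ge [z_mono z_sup]] := net.
have le1_refl := vl_refl vl1.
have fst_net : net_up le1 0 leA (fun a => (z a).1) x.
  split=> [a|]; first exact: lex_le_fst le1_refl (z_ge a).
  split=> [a b ab|]; first exact: lex_le_fst le1_refl (z_mono _ _ ab).
  exact: lex_is_sup_fst vl1 z_sup.
have [s [s_inc [_ [_ s_sup]]]] := csp1 _ _ _ _ dir fst_net.
exists s; split=> //; apply: lex_is_sup_of_fst le1_refl _ _ s_sup.
- exact: lex_sup_snd_least z1_ne z_sup.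
- by move=> n; apply: z_sup.1; exists (s n).
Qed.

End LexCountableSup.

Lemma lex_countable_sup_property (R : realType) (E1 E2 : lmodType R)
    (le1 : E1 -> E1 -> Prop) (le2 : E2 -> E2 -> Prop) :
  is_vector_lattice le1 -> is_vector_lattice le2 ->
  countable_sup_property le1 0 -> countable_sup_property le2 0 ->
  countable_sup_property (lex_le le1 le2) (0, 0).
Proof.
move=> vl1 vl2 csp1 csp2; apply: countable_sup_property_of_sup_subseq.
move=> A leA z [x y] dir net.
case: (classic (exists b0, (z b0).1 = x)) => [[b0 zb0] | z1_ne].
  exact: lex_sup_subseq_attained csp2 zb0.
by apply: lex_sup_subseq_unattained => // a z1a; apply: z1_ne; exists a.
Qed.

Theorem proposition6p1 (R : realType) (E1 E2 : lmodType R)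
  (le1 : E1 -> E1 -> Prop) (le2 : E2 -> E2 -> Prop) :
  is_vector_lattice le1 -> is_vector_lattice le2 ->
  countable_sup_property le1 0 -> countable_sup_property le2 0 ->
  countable_sup_property (coord_le le1 le2) (0, 0) /\
  countable_sup_property (lex_le le1 le2) (0, 0).
Proof.
move=> vl1 vl2 csp1 csp2; split.
- by apply: coord_countable_sup_property => //; apply: vl_trans.
- exact: lex_countable_sup_property.
Qed.
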